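(* Let $G$ be a connected graph of order $n\geq 2$ and let $H$ be a connected graph of order $m\geq 1$. (1) If $0\leq g\leq m-1$, then $\kappa_g(G*H)=1$. (2) Let $k\geq 1$ be an integer such that $G$ has at least one $R_k$-cutset, and let $g$ be an integer with $k(m+1)<g+1\leq (k+1)(m+1)$. Then $G*H$ has an $R_g$-cutset and $$\kappa_g(G*H)=|X|(m+1),$$ where $X$ is a minimum-cardinality vertex subset of $G$ such that $G-X$ is disconnected and every connected component of $G-X$ has at least $k+1$ vertices (i.e. $|X|=\kappa_k(G)$).
   Context: All graphs are finite and simple. The corona $G*H$ is obtained by taking one copy of $G$ and $|V(G)|$ disjoint copies of $H$, and joining every vertex of the $i$-th copy of $H$ to the $i$-th vertex of $G$, for $i=1,\ldots,|V(G)|$. A set $S\subseteq V(G)$ is a cutset if $G-S$ is disconnected. For a non-negative integer $g$, a cutset $S$ is an $R_g$-cutset if every connected component of $G-S$ has at least $g+1$ vertices. If $G$ has at least one $R_g$-cutset, the $g$-extra connectivity $\kappa_g(G)$ is the minimum cardinality of an $R_g$-cutset of $G$. *)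

(* A finite simple graph is a symmetric irreflexive
   relation e : rel V on a finType V. *)
From mathcomp Require Import all_boot.
Set Implicit Arguments. Unset Strict Implicit. Unset Printing Implicit Defensive.

(* Corona G*H: vertices inl i (copy of G) and inr (i,h) (vertex h of the i-th
   copy of H).  Edges: G-edges, H-edges inside each copy, and i -- (i,h). *)
Definition corona_rel (T T' : finType) (eG : rel T) (eH : rel T')
  : rel (T + (T * T'))%type :=
  fun x y =>
    match x, y with
    | inl a, inl b => eG a b
    | inl a, inr (i, _) => a == i
    | inr (i, _), inl a => i == a
    | inr (i, h), inr (j, h') => (i == j) && eH h h'
    end.

Section Conn.
Variable V : finType.
Implicit Types (e : rel V) (S : {set V}).

Definition gconnected e := forall x y : V, connect e x y.

Definition del_rel e S : rel V := fun x y => [&& x \notin S, y \notin S & e x y].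

Definition comp e S (x : V) : {set V} :=
  [set y | (y \notin S) && connect (del_rel e S) x y].

Definition cutset e S : bool :=
  [exists x, exists y, [&& x \notin S, y \notin S & ~~ connect (del_rel e S) x y]].

Definition Rg_cutset e (g : nat) S : bool :=
  cutset e S && [forall x, (x \notin S) ==> (g < #|comp e S x|)].

Definition has_Rg_cutset e (g : nat) : bool := [exists S, Rg_cutset e g S].

(* kappa_g: minimum cardinality of an R_g-cutset (meaningful when one exists) *)
Definition kappa e (g : nat) : nat :=
  \big[minn/#|V|]_(S : {set V} | Rg_cutset e g S) #|S|.
End Conn.

(* The vertices of G*H are V = T + T*T'; base : V -> T sends inl a to a and
   inr (i,h) to i, and for S : {set V} the base set of S is
   X = {a | inl a \in S}.  Two transfer principles relate G*H - S to G - X: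
   base maps paths of G*H - S to walks of G - X (base_connect), and two
   vertices of G*H - S whose bases survive in G - X and are connected there
   are connected in G*H - S (lift_connect).  The fiber of C : {set T}, i.e.
   all vertices with base in C, has #|C| * (m+1) elements (card_fiber).
   (1) Deleting a single vertex inl i of G leaves components that each
       contain a whole copy of H, so [set inl i] is an R_g-cutset for g < m,
       while G*H is connected, so no R_g-cutset is empty.
   (2) If k(m+1) <= g < (k+1)(m+1), the fiber of an R_k-cutset of G is an
       R_g-cutset of G*H (fiber_Rg_cutset); conversely an R_g-cutset S of G*H
       contains the fiber of its base set X, since otherwise a copy of H with
       only m <= g vertices would be a component (Rg_cutset_fiber_sub), and X
       is then an R_k-cutset of G (base_Rg_cutset).  Hence
       kappa_g(G*H) = kappa_k(G) * (m+1). *)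
From Pilot Require Import Defs.
From mathcomp Require Import all_boot all_order zify.
Set Implicit Arguments. Unset Strict Implicit. Unset Printing Implicit Defensive.
Import Order.TTheory.

Section ExtraConnectivity.
Variables (V : finType) (e : rel V).

Lemma kappa_le_cutset g (S : {set V}) : Rg_cutset e g S -> kappa e g <= #|S|.
Proof.
move=> RS; rewrite /kappa -minEnat.
exact: (@bigmin_le_cond _ nat _ #|V| S (Rg_cutset e g) (fun S => #|S|) RS).
Qed.

Lemma kappa_ge g b :
  b <= #|V| -> (forall S : {set V}, Rg_cutset e g S -> b <= #|S|) -> b <= kappa e g.
Proof.
move=> bV bS; apply: (big_ind (fun x => b <= x)) => // x y bx bY.
by rewrite leq_min bx.
Qed.

Lemma kappa_attained g (S : {set V}) :
  Rg_cutset e g S -> exists2 X : {set V}, Rg_cutset e g X & kappa e g = #|X|.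
Proof.
move=> RS; rewrite /kappa -minEnat.
have [X RX ->] := @eq_bigmin _ nat _ #|V| S (Rg_cutset e g) (fun X => #|X|) RS
  (fun X _ => max_card X).
by exists X.
Qed.

Lemma connect_from_deleted (S : {set V}) x y :
  x \in S -> connect (del_rel e S) x y -> x = y.
Proof.
move=> xS /connectP [[|z p] /=]; first by move=> _ ->.
by rewrite /del_rel xS.
Qed.

Lemma del_rel_sym (S : {set V}) : symmetric e -> symmetric (del_rel e S).
Proof. by move=> se x y; rewrite /del_rel se andbCA. Qed.

Lemma connect_del0 : connect (del_rel e set0) =2 connect e.
Proof. by apply: eq_connect => x y; rewrite /del_rel !in_set0. Qed.

Lemma cutset_nonempty (S : {set V}) : gconnected e -> cutset e S -> 0 < #|S|.
Proof.
move=> conn /existsP [x /existsP [y /and3P [_ _ nxy]]].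
by rewrite card_gt0; apply: contra nxy => /eqP ->; rewrite connect_del0.
Qed.
End ExtraConnectivity.

Lemma connect_morph (A B : finType) (r : rel A) (r' : rel B) (f : A -> B) :
  (forall a b, r a b -> connect r' (f a) (f b)) ->
  forall a b, connect r a b -> connect r' (f a) (f b).
Proof.
move=> fr a b /connectP [p]; elim: p a => [|c p IH] a /=; first by move=> _ ->.
by case/andP=> rac pc lastb; apply: connect_trans (fr _ _ rac) (IH _ pc lastb).
Qed.

Section Corona.
Variables (T T' : finType) (eG : rel T) (eH : rel T').
Hypotheses (symG : symmetric eG) (symH : symmetric eH).

Local Notation vertex := (T + T * T')%type.
Local Notation e := (corona_rel eG eH).

Definition base (v : vertex) : T := match v with inl a => a | inr (i, _) => i end.

Definition fiber (C : {set T}) : {set vertex} := [set v | base v \in C].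

Definition base_set (S : {set vertex}) : {set T} := [set a | inl a \in S].

Definition hcopy (i : T) : {set vertex} := [set inr (i, h) | h : T'].

Lemma corona_sym : symmetric e.
Proof.
move=> [a|[i h]] [b|[j h']] /=.
- exact: symG.
- exact: eq_sym.
- exact: eq_sym.
- by rewrite eq_sym symH.
Qed.

Lemma card_hcopy i : #|hcopy i| = #|T'|.
Proof. by rewrite card_imset // => h h' [->]. Qed.

(* Each vertex a of G has m+1 vertices over it: inl a and the copy inr (a, _). *)
Lemma card_fiber (C : {set T}) : #|fiber C| = #|C| * (#|T'| + 1).
Proof.
pose lift (p : T * option T') : vertex :=
  if p.2 is Some h then inr (p.1, h) else inl p.1.
have lift_inj : injective lift by move=> [a [h|]] [b [h'|]] //= [-> //] ->.
have -> : fiber C = lift @: setX C [set: option T'].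
  apply/setP=> v; rewrite inE; apply/idP/imsetP => [|[[a o] + ->]].
    case: v => [a|[a h]] /= aC.
      by exists (a, None); rewrite ?in_setX ?aC ?in_setT.
    by exists (a, Some h); rewrite ?in_setX ?aC ?in_setT.
  by rewrite in_setX => /andP [aC _]; case: o.
by rewrite card_imset // cardsX cardsT card_option addn1.
Qed.

Lemma base_set_fiber (X : {set T}) : base_set (fiber X) = X.
Proof. by apply/setP=> a; rewrite !inE. Qed.

Lemma base_connect (S : {set vertex}) x y :
  connect (del_rel e S) x y -> connect (del_rel eG (base_set S)) (base x) (base y).
Proof.
apply: connect_morph => -[a|[i h]] [b|[j h']] /and3P [xS yS /= exy] /=.
- by apply: connect1; rewrite /del_rel !inE xS yS.
- by rewrite (eqP exy).
- by rewrite (eqP exy).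
- by case/andP: exy => /eqP -> _.
Qed.

(* Lifting: a surviving vertex is joined to its surviving base vertex, and
   walks of G - base_set S lift to the copy of G in G*H - S. *)
Lemma lift_connect (S : {set vertex}) x y :
  x \notin S -> y \notin S -> base x \notin base_set S -> base y \notin base_set S ->
  connect (del_rel eG (base_set S)) (base x) (base y) -> connect (del_rel e S) x y.
Proof.
have to_base v : v \notin S -> base v \notin base_set S ->
    connect (del_rel e S) v (inl (base v)).
  case: v => [a|[i h]] vS; rewrite inE => iS; first exact: connect0.
  by apply: connect1; rewrite /del_rel /= vS iS eqxx.
move=> xS yS bx byy /(connect_morph (f := inl) (r' := del_rel e S)) cxy.
have {}cxy : connect (del_rel e S) (inl (base x)) (inl (base y)).
  by apply: cxy => a b; rewrite /del_rel !inE => ab; apply: connect1.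
apply: connect_trans (to_base x xS bx) (connect_trans cxy _).
by rewrite (sym_connect_sym (del_rel_sym S corona_sym)) to_base.
Qed.

Lemma corona_connected : gconnected eG -> gconnected e.
Proof.
move=> connG x y; rewrite -connect_del0.
have base0 : base_set set0 = set0 by apply/setP=> a; rewrite !inE.
by apply: lift_connect; rewrite ?base0 ?in_set0 ?connect_del0.
Qed.

Lemma hcopy_sub_comp (S : {set vertex}) x :
  gconnected eH -> x \notin S -> (forall h, inr (base x, h) \notin S) ->
  hcopy (base x) \subset Defs.comp e S x.
Proof.
move=> connH xS copyS; apply/subsetP=> _ /imsetP [h _ ->].
rewrite inE copyS /=; case: x xS copyS => [a|[i h']] xS copyS /=.
  by apply: connect1; rewrite /del_rel /= xS copyS eqxx.
apply: (connect_morph (f := fun h => inr (i, h))) (connH h' h) => u v uv.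
by apply: connect1; rewrite /del_rel /= !copyS eqxx.
Qed.

Lemma vertex_Rg_cutset g i j :
  gconnected eH -> i != j -> g < #|T'| -> Rg_cutset e g [set inl i].
Proof.
move=> connH ij gm; have /card_gt0P [h0 _] : 0 < #|T'| by apply: leq_ltn_trans gm.
have copyS k h : inr (k, h) \notin [set @inl T (T * T') i] by rewrite in_set1.
apply/andP; split.
  apply/existsP; exists (inr (i, h0)); apply/existsP; exists (inl j).
  rewrite copyS in_set1 /= eq_sym ij /=; apply/negP => /base_connect /=.
  move/connect_from_deleted; rewrite !inE eqxx => /(_ isT) /eqP.
  exact/negP.
apply/forallP=> x; apply/implyP=> xS.
apply: leq_trans gm _; rewrite -(card_hcopy (base x)).
exact/subset_leq_card/hcopy_sub_comp.
Qed.

Lemma fiber_Rg_cutset k g (X : {set T}) :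
  Rg_cutset eG k X -> g < k.+1 * (#|T'| + 1) -> Rg_cutset e g (fiber X).
Proof.
case/andP=> /existsP [a /existsP [b /and3P [aX bX nab]]] /forallP bigG gk.
apply/andP; split.
  apply/existsP; exists (inl a); apply/existsP; exists (inl b).
  rewrite !inE aX bX /=; apply: contra nab => /base_connect.
  by rewrite base_set_fiber.
apply/forallP=> x; apply/implyP=> xX.
have bx : base x \notin X by rewrite inE in xX.
have compG : k < #|Defs.comp eG X (base x)| by have := bigG (base x); rewrite bx.
have sub : fiber (Defs.comp eG X (base x)) \subset Defs.comp e (fiber X) x.
  apply/subsetP=> v; rewrite !inE => /andP [bv cxv]; rewrite bv /=.
  by apply: lift_connect; rewrite ?base_set_fiber ?inE.
apply: leq_trans gk (leq_trans _ (subset_leq_card sub)).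
by rewrite card_fiber leq_mul2r compG orbT.
Qed.

(* Part (2), key step: when m <= g, an R_g-cutset of G*H contains the fiber of
   its base set, since a surviving copy of H over a deleted vertex would be a
   component with at most m vertices. *)
Lemma Rg_cutset_fiber_sub g (S : {set vertex}) :
  #|T'| <= g -> Rg_cutset e g S -> fiber (base_set S) \subset S.
Proof.
move=> mg /andP [_ /forallP bigS]; apply/subsetP=> v; rewrite !inE.
case: v => [a|[a h]] /= aS; first by [].
apply/negPn/negP=> vS; have := bigS (inr (a, h)); rewrite vS /=.
suff /subset_leq_card : Defs.comp e S (inr (a, h)) \subset hcopy a.
  by rewrite card_hcopy => cm /leq_trans/(_ cm); rewrite ltnNge mg.
apply/subsetP=> w; rewrite inE => /andP [wS /base_connect /=].
move/connect_from_deleted; rewrite inE => /(_ aS) aw.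
case: w wS aw => [b|[b h']] /= wS ab; first by rewrite -ab aS in wS.
by rewrite ab; apply: imset_f.
Qed.

Lemma base_Rg_cutset k g (S : {set vertex}) :
  k * (#|T'| + 1) <= g -> Rg_cutset e g S -> fiber (base_set S) \subset S ->
  Rg_cutset eG k (base_set S).
Proof.
move=> kg /andP [/existsP [x /existsP [y /and3P [xS yS nxy]]] /forallP bigS] sub.
have outside v : v \notin S -> base v \notin base_set S.
  by move=> vS; apply: contra vS => bv; apply: (subsetP sub); rewrite inE.
apply/andP; split.
  apply/existsP; exists (base x); apply/existsP; exists (base y).
  rewrite (outside x xS) (outside y yS) /=; apply: contra nxy.
  exact: lift_connect xS yS (outside x xS) (outside y yS).
apply/forallP=> a; apply/implyP=> aS.
have aS' : inl a \notin S by rewrite inE in aS.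
have := bigS (inl a); rewrite aS' /= => compH.
have csub : Defs.comp e S (inl a) \subset fiber (Defs.comp eG (base_set S) a).
  apply/subsetP=> v; rewrite !inE => /andP [vS /base_connect ->].
  by have := outside v vS; rewrite inE andbT.
have := leq_trans (leq_ltn_trans kg compH) (subset_leq_card csub).
by rewrite card_fiber ltn_mul2r => /andP [].
Qed.
End Corona.

Theorem theorem2p2 (T T' : finType) (eG : rel T) (eH : rel T')
  (symG : symmetric eG) (irrG : irreflexive eG)
  (symH : symmetric eH) (irrH : irreflexive eH)
  (connG : gconnected eG) (connH : gconnected eH)
  (n m : nat) (hn : #|T| = n) (hm : #|T'| = m) (n2 : 2 <= n) (m1 : 1 <= m) :
  (forall g : nat, g <= m - 1 ->
     has_Rg_cutset (corona_rel eG eH) g /\ kappa (corona_rel eG eH) g = 1)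
  /\
  (forall k g : nat, 1 <= k -> has_Rg_cutset eG k ->
     k * (m + 1) < g + 1 <= (k + 1) * (m + 1) ->
     has_Rg_cutset (corona_rel eG eH) g /\
     kappa (corona_rel eG eH) g = kappa eG k * (m + 1)).
Proof.
subst n m; split=> [g gm | k g k1 /existsP [X0 RX0]].
- have [i [j [_ _ ij]]] : exists i j : T, [/\ i \in T, j \in T & i != j].
    by apply/card_gt1P.
  have R1 : Rg_cutset (corona_rel eG eH) g [set inl i].
    by apply: vertex_Rg_cutset connH ij _; lia.
  split; first by apply/existsP; exists [set inl i].
  apply/anti_leq; rewrite -{1}(cards1 (@inl T (T * T') i)) kappa_le_cutset //=.
  apply: kappa_ge => [|S /andP [cS _]]; first by apply/card_gt0P; exists (inl i).
  by apply: cutset_nonempty cS; apply: corona_connected.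
- rewrite [g + 1]addn1 ltnS [k + 1]addn1 => /andP [lo hi].
  have [X RX kX] := kappa_attained RX0.
  have RF : Rg_cutset (corona_rel eG eH) g (fiber T' X).
    exact: fiber_Rg_cutset RX hi.
  split; first by apply/existsP; exists (fiber T' X).
  apply/anti_leq; rewrite kX -card_fiber kappa_le_cutset //=.
  apply: kappa_ge => [|S RS]; first exact: max_card.
  have mg : #|T'| <= g.
    by apply: leq_trans (leqnSn _) (leq_trans _ lo); rewrite -addn1 leq_pmull.
  have sub := Rg_cutset_fiber_sub mg RS.
  have RXS : Rg_cutset eG k (base_set S) := base_Rg_cutset symG symH lo RS sub.
  apply: leq_trans (subset_leq_card sub).
  by rewrite !card_fiber leq_mul2r -kX (kappa_le_cutset RXS) orbT.
Qed.
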